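(* Let $\mathcal{X}$ be a nonempty convex subset of $\mathbb{R}^n$ and let $\textbf{F}:\mathcal{X}\rightarrow I(\mathbb{R})$ be a strongly convex and $gH$-differentiable IVF with $gH$-Lipschitz gradient on $\mathcal{X}$. Then there exist $\sigma>0$ and $L>0$ such that, if $\bar{x}\in\mathcal{X}$ is an efficient solution of the IOP $\min_{x\in\mathcal{X}}\textbf{F}(x)$, the mapping $H_\alpha(x)=x-\alpha\, \mathcal{W}(\nabla \textbf{F}(x))$ with constant step size $\alpha\in\left[0, \frac{2\sigma}{L^2}\right]$ satisfies \[ \lVert H_\alpha(x)-H_\alpha(\bar{x}) \rVert \leq \lVert x-\bar{x} \rVert \quad\text{for all } x\in \mathcal{X}. \]
   Context: $I(\mathbb{R})$ is the set of closed bounded intervals $\textbf{A}=[\underline{a},\overline{a}]$, with Moore arithmetic $\oplus,\odot$. The $gH$-difference is $\textbf{A}\ominus_{gH}\textbf{B}=[\min\{\underline{a}-\underline{b},\overline{a}-\overline{b}\},\max\{\underline{a}-\underline{b},\overline{a}-\overline{b}\}]$. Dominance: $\textbf{A}\preceq\textbf{B}$ iff $\underline{a}\le\underline{b}$ and $\overline{a}\le\overline{b}$; $\textbf{A}\prec\textbf{B}$ iff $\textbf{A}\preceq\textbf{B}$ and $\textbf{A}\neq\textbf{B}$; $\not\preceq$, $\not\prec$ are the negations. An IVF is $\textbf{F}(x)=[\underline{f}(x),\overline{f}(x)]$. A point $\bar{x}\in\mathcal{X}$ is an efficient solution of $\min_{x\in\mathcal{X}}\textbf{F}(x)$ if $\textbf{F}(x)\not\prec\textbf{F}(\bar{x})$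 for all $x\neq\bar{x}$ in $\mathcal{X}$. $\textbf{F}$ is $gH$-differentiable at $\bar{x}$ if there are a linear IVF $\textbf{L}_{\bar{x}}(d)=\bigoplus_{i=1}^n d_i\odot\textbf{L}_{\bar{x}}(e_i)$ and an IVF $\textbf{E}$ with $(\textbf{F}(\bar{x}+d)\ominus_{gH}\textbf{F}(\bar{x}))\ominus_{gH}\textbf{L}_{\bar{x}}(d)=\lVert d\rVert\odot\textbf{E}(\textbf{F}(\bar{x});d)$ for small $\lVert d\rVert$, where $\textbf{E}\to\textbf{0}$ as $\lVert d\rVert\to0$. The $gH$-gradient is $\nabla\textbf{F}(x)=(D_1\textbf{F}(x),\ldots,D_n\textbf{F}(x))^T$, where $D_i\textbf{F}$ are partial $gH$-derivatives (defined via $\lim_{h\to0}\frac{1}{h}\odot(\textbf{G}_i(x_i+h)\ominus_{gH}\textbf{G}_i(x_i))$ along coordinate $i$). $\textbf{F}$ is strongly convex if $\textbf{F}(x)=\textbf{G}(x)\oplus\frac12\lVert x\rVert^2\odot[\sigma,\sigma]$ for some convex IVF $\textbf{G}$ and $\sigma>0$ (convex meaning $\textbf{G}(\lambda x+(1-\lambda)y)\preceq\lambda\odot\textbf{G}(x)\oplus(1-\lambda)\odot\textbf{G}(y)$). $\textbf{F}$ has $gH$-Lipschitz gradient if $\lVert\nabla\textbf{F}(x)\ominus_{gH}\nabla\textbf{F}(y)\rVert_{I(\mathbb{R})^n}\le M\lVert x-y\rVert$, where $\lVert\textbf{A}\rVert_{I(\mathbb{R})}=\max\{|\underline{a}|,|\overline{a}|\}$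 and $\lVert(\textbf{A}_1,\ldots,\textbf{A}_n)\rVert_{I(\mathbb{R})^n}=\sum_i\lVert\textbf{A}_i\rVert_{I(\mathbb{R})}$. For fixed $w,w'\in[0,1]$ with $w+w'=1$, $\mathcal{W}:I(\mathbb{R})^n\to\mathbb{R}^n$ is $\mathcal{W}(\textbf{A}_1,\ldots,\textbf{A}_n)=(w\underline{a}_1+w'\overline{a}_1,\ldots,w\underline{a}_n+w'\overline{a}_n)^T$. *)

From HB Require Import structures.
From mathcomp Require Import all_boot all_order all_algebra.
From mathcomp Require Import reals.
Set Implicit Arguments. Unset Strict Implicit. Unset Printing Implicit Defensive.
Import Order.TTheory GRing.Theory Num.Theory.
Local Open Scope ring_scope.

Section IVF.
Variable R : realType.

(* An interval [a_lo, a_hi] is represented by the pair (a_lo, a_hi);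
   being an interval (a_lo <= a_hi) is imposed as a hypothesis where needed. *)
Definition itv := (R * R)%type.

Definition is_itv (A : itv) : Prop := A.1 <= A.2.

Definition iadd (A B : itv) : itv := (A.1 + B.1, A.2 + B.2).
Definition ismul (c : R) (A : itv) : itv :=
  (Num.min (c * A.1) (c * A.2), Num.max (c * A.1) (c * A.2)).
Definition igH (A B : itv) : itv :=
  (Num.min (A.1 - B.1) (A.2 - B.2), Num.max (A.1 - B.1) (A.2 - B.2)).
Definition ile (A B : itv) : Prop := A.1 <= B.1 /\ A.2 <= B.2.
Definition ilt (A B : itv) : Prop := ile A B /\ A <> B.
Definition inorm (A : itv) : R := Num.max `|A.1| `|A.2|.
Definition inormn (n : nat) (A : 'I_n -> itv) : R := \sum_(i < n) inorm (A i).

Definition enorm (n : nat) (v : 'rV[R]_n) : R := Num.sqrt (\sum_(i < n) v 0 i ^+ 2).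

Definition ebasis (n : nat) (i : 'I_n) : 'rV[R]_n := \row_j (if j == i then 1 else 0).

Definition linIVF (n : nat) (Le : 'I_n -> itv) (d : 'rV[R]_n) : itv :=
  \big[iadd/(0, 0)]_(i < n) ismul (d 0 i) (Le i).

Definition is_IVF (n : nat) (F : 'rV[R]_n -> itv) : Prop := forall x, is_itv (F x).

Definition convex_set (n : nat) (X : 'rV[R]_n -> Prop) : Prop :=
  forall x y (l : R), X x -> X y -> 0 <= l <= 1 -> X (l *: x + (1 - l) *: y).

Definition gH_differentiable_at (n : nat) (F : 'rV[R]_n -> itv) (xb : 'rV[R]_n) : Prop :=
  exists (Le : 'I_n -> itv) (E : 'rV[R]_n -> itv) (delta : R), 0 < delta /\
    (forall d, enorm d < delta ->
       igH (igH (F (xb + d)) (F xb)) (linIVF Le d) = ismul (enorm d) (E d)) /\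
    (forall eps : R, 0 < eps -> exists eta : R, 0 < eta /\
       forall d, 0 < enorm d < eta -> inorm (E d) < eps).

Definition is_partial_gH (n : nat) (F : 'rV[R]_n -> itv) (x : 'rV[R]_n) (i : 'I_n)
    (A : itv) : Prop :=
  forall eps : R, 0 < eps -> exists delta : R, 0 < delta /\
    forall h : R, 0 < `|h| < delta ->
      inorm (igH (ismul h^-1 (igH (F (x + h *: ebasis i)) (F x))) A) < eps.

Definition is_gH_gradient (n : nat) (X : 'rV[R]_n -> Prop) (F : 'rV[R]_n -> itv)
    (gF : 'rV[R]_n -> 'I_n -> itv) : Prop :=
  forall x, X x -> forall i, is_partial_gH F x i (gF x i).

Definition convex_IVF_on (n : nat) (X : 'rV[R]_n -> Prop) (G : 'rV[R]_n -> itv) : Prop :=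
  forall x y (l : R), X x -> X y -> 0 <= l <= 1 ->
    ile (G (l *: x + (1 - l) *: y)) (iadd (ismul l (G x)) (ismul (1 - l) (G y))).

Definition strongly_convex_on (n : nat) (X : 'rV[R]_n -> Prop) (F : 'rV[R]_n -> itv) : Prop :=
  exists (G : 'rV[R]_n -> itv) (sigma : R), 0 < sigma /\
    (forall x, X x -> is_itv (G x)) /\ convex_IVF_on X G /\
    forall x, X x -> F x = iadd (G x) (ismul (2^-1 * enorm x ^+ 2) (sigma, sigma)).

Definition gH_Lipschitz_gradient_on (n : nat) (X : 'rV[R]_n -> Prop)
    (gF : 'rV[R]_n -> 'I_n -> itv) : Prop :=
  exists M : R, 0 < M /\ forall x y, X x -> X y ->
    inormn (fun i => igH (gF x i) (gF y i)) <= M * enorm (x - y).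

Definition efficient (n : nat) (X : 'rV[R]_n -> Prop) (F : 'rV[R]_n -> itv) (xb : 'rV[R]_n) : Prop :=
  X xb /\ forall x, X x -> x <> xb -> ~ ilt (F x) (F xb).

Definition Wmap (n : nat) (w w' : R) (A : 'I_n -> itv) : 'rV[R]_n :=
  \row_i (w * (A i).1 + w' * (A i).2).

End IVF.

(** The endpoints of [F] are [sigma]-strongly convex, and gH-differentiability
    says that [F (z + e) -gH F z] is, to first order, [L_z e := linIVF (gF z) e].
    Comparing the expansions at [x] and [y] shows that both endpoints of the
    linear model are strongly monotone:
    [sigma |y - x|^2 <= L_y (y - x) - L_x (y - x)] endpointwise.
    At a point [z] where all products [d_i * width (gF z i)] have one sign,
    [<d, W (gF z)>] is [w (L_z d).1 + w' (L_z d).2], or the same with the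
    endpoints swapped.  Such a common sign exists at every point of a segment
    of direction [d]: to first order the width of [F] has increments
    [sum_i |e_i| width (gF z i)], and two nearby points of the segment at which
    this holds at a common scale (found by a Baire category argument) would
    otherwise violate the triangle inequality.  Cutting the segment at a zero of
    [sum_i d_i * width (gF z i)] (IVT) gives the strong monotonicity of
    [x |-> W (gF x)]; with [|W (gF x) - W (gF y)| <= L |x - y|], expanding
    [|d - alpha v|^2] concludes. *)

From mathcomp Require Import all_boot all_order all_algebra.
From mathcomp Require Import reals ring lra.
From mathcomp Require Import boolp classical_sets topology normedtype sequences.
Import Order.TTheory GRing.Theory Num.Theory.
Import numFieldNormedType.Exports.
Local Open Scope ring_scope.
Set Implicit Arguments. Unset Strict Implicit. Unset Printing Implicit Defensive.

Section RealFacts.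
Variable R : realType.
Implicit Types (a b c u v x y : R).

Lemma min_le_max u v : Num.min u v <= Num.max u v.
Proof. by rewrite le_max !ge_min lexx. Qed.

Lemma max_norm_min_max u v :
  Num.max `|Num.min u v| `|Num.max u v| = Num.max `|u| `|v|.
Proof. by have [] := leP u v; rewrite // maxC. Qed.

Lemma dist_min_le u1 u2 v1 v2 :
  `|Num.min u1 u2 - Num.min v1 v2| <= Num.max `|u1 - v1| `|u2 - v2|.
Proof.
set m := Num.max `|u1 - v1| `|u2 - v2|.
have /andP[] : (`|u1 - v1| <= m) && (`|u2 - v2| <= m) by rewrite -ge_max.
by rewrite !ler_norml; have [] := leP u1 u2; have [] := leP v1 v2; lra.
Qed.

Lemma dist_max_le u1 u2 v1 v2 :
  `|Num.max u1 u2 - Num.max v1 v2| <= Num.max `|u1 - v1| `|u2 - v2|.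
Proof.
set m := Num.max `|u1 - v1| `|u2 - v2|.
have /andP[] : (`|u1 - v1| <= m) && (`|u2 - v2| <= m) by rewrite -ge_max.
by rewrite !ler_norml; have [] := leP u1 u2; have [] := leP v1 v2; lra.
Qed.

Lemma min_add_max_le u1 u2 v1 v2 c :
  u1 + v1 <= c -> u2 + v2 <= c -> Num.min u1 u2 + Num.max v1 v2 <= c.
Proof. by have [] := leP u1 u2; have [] := leP v1 v2; lra. Qed.

Lemma ler_addgt0_scaled x y c : 0 <= c ->
  (forall eps, 0 < eps -> x <= y + eps * c) -> x <= y.
Proof.
move=> c0 h; apply/ler_addgt0Pr => e e0.
have c1 : 0 < c + 1 by rewrite ltr_wpDl.
apply: le_trans (h _ (divr_gt0 e0 c1)) _.
by rewrite lerD2l mulrAC ler_pdivrMr // ler_pM2l // lerDl.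
Qed.

Lemma normrD_cases x y : `|x + y| = `|x| + `|y| \/ `|x + y| = `| `|x| - `|y| |.
Proof.
have [x0|x0] := leP 0 x; have [y0|y0] := leP 0 y.
- by left; rewrite !ger0_norm ?addr_ge0.
- by right; rewrite (ger0_norm x0) (ltr0_norm y0) opprK.
- by right; rewrite (ltr0_norm x0) (ger0_norm y0) -opprD normrN.
- by left; rewrite !ltr0_norm ?opprD //; lra.
Qed.

Lemma ler_distDD x s t y : `|x - y| <= `|x - s| + `|s - t| + `|t - y|.
Proof. by apply: le_trans (ler_distD s x y) _; rewrite -addrA lerD2l ler_distD. Qed.

Lemma mulr_ge0_cases a b : 0 <= a * b -> (0 <= a /\ 0 <= b) \/ (a <= 0 /\ b <= 0).
Proof. by have [a0|a0] := leP 0 a; have [b0|b0] := leP 0 b; [left|right|right|right]; nra. Qed.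

Lemma mulr_le0_min_max a b : a * b <= 0 -> Num.min a b <= 0 <= Num.max a b.
Proof. by have [] := leP a b; nra. Qed.

Lemma exists_subinterval01 t0 rho : 0 <= t0 <= 1 -> 0 < rho ->
  exists a b, [/\ a < b, 0 <= a, b <= 1 & forall t, a <= t <= b -> `|t - t0| <= rho].
Proof.
move=> /andP[t00 t01] rho0; set m := Num.min rho (1 / 2).
have [mr mh] : m <= rho /\ m <= 1 / 2 by rewrite !ge_min !lexx orbT.
have m0 : 0 < m by rewrite lt_min rho0 divr_gt0.
have [th|th] := leP t0 (1 / 2).
  by exists t0, (t0 + m); split=> [|||t /andP[? ?]]; rewrite ?ler_norml; lra.
by exists (t0 - m), t0; split=> [|||t /andP[? ?]]; rewrite ?ler_norml; lra.
Qed.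

End RealFacts.

Section IntervalArithmetic.
Variable R : realType.
Implicit Types (A B C : itv R) (c d : R).

Definition width A : R := A.2 - A.1.

Lemma inorm_igH A B : inorm (igH A B) = Num.max `|A.1 - B.1| `|A.2 - B.2|.
Proof. by rewrite /inorm /igH /= max_norm_min_max. Qed.

Lemma inorm_igHC A B : inorm (igH A B) = inorm (igH B A).
Proof. by rewrite !inorm_igH distrC [`|A.2 - _|]distrC. Qed.

Lemma inorm_igH_le A B c :
  inorm (igH A B) <= c -> `|A.1 - B.1| <= c /\ `|A.2 - B.2| <= c.
Proof. by rewrite inorm_igH ge_max => /andP. Qed.

Lemma inorm_ge0 A : 0 <= inorm A.
Proof. by rewrite /inorm le_max normr_ge0. Qed.

Lemma igH_triangle A B C :
  inorm (igH A C) <= inorm (igH A B) + inorm (igH B C).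
Proof.
have [ab1 ab2] := inorm_igH_le (lexx (inorm (igH A B))).
have [bc1 bc2] := inorm_igH_le (lexx (inorm (igH B C))).
rewrite inorm_igH ge_max; apply/andP; split.
  by apply: le_trans (ler_distD B.1 _ _) _; exact: lerD.
by apply: le_trans (ler_distD B.2 _ _) _; exact: lerD.
Qed.

Lemma igH_small_eq A B : (forall eps, 0 < eps -> inorm (igH A B) <= eps) -> A = B.
Proof.
move=> small; have [a1 a2] : `|A.1 - B.1| = 0 /\ `|A.2 - B.2| = 0.
  split; apply/le_anti; rewrite normr_ge0 andbT; apply/ler_addgt0Pr => e e0;
  by rewrite add0r; have [] := inorm_igH_le (small e e0).
move/normr0_eq0/eqP: a1; move/normr0_eq0/eqP: a2; rewrite !subr_eq0 => /eqP a2 /eqP a1.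
by rewrite [A]surjective_pairing [B]surjective_pairing a1 a2.
Qed.

Lemma ismulE c A : 0 <= c -> ismul c A = (c * Num.min A.1 A.2, c * Num.max A.1 A.2).
Proof. by move=> c0; rewrite /ismul minr_pMr // maxr_pMr. Qed.

Lemma inorm_ismul c A : 0 <= c -> inorm (ismul c A) = c * inorm A.
Proof.
move=> c0; rewrite ismulE // /inorm /= !normrM (ger0_norm c0) -maxr_pMr //.
by rewrite max_norm_min_max.
Qed.

Lemma ismul_ismul1 c A : ismul c (ismul 1 A) = ismul c A.
Proof.
rewrite [ismul 1 A]ismulE ?ler01 // !mul1r; have [_|_] := leP A.1 A.2; first by case: A.
by rewrite /ismul /= minC maxC.
Qed.

Lemma ismulA c d A : 0 <= c -> 0 <= d -> ismul c (ismul d A) = ismul (c * d) A.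
Proof.
move=> c0 d0; rewrite [ismul d A]ismulE // ismulE // [RHS]ismulE ?mulr_ge0 //=.
have le : d * Num.min A.1 A.2 <= d * Num.max A.1 A.2 by rewrite ler_wpM2l ?min_le_max.
by rewrite (min_l le) (max_r le) !mulrA.
Qed.

Lemma inorm_igH_ismul c A B : 0 <= c ->
  inorm (igH (ismul c A) (ismul c B)) <= c * inorm (igH A B).
Proof.
move=> c0; rewrite !ismulE // !inorm_igH /= -!mulrBr !normrM (ger0_norm c0) -maxr_pMr //.
by rewrite ler_wpM2l // ge_max dist_min_le dist_max_le.
Qed.

Lemma width_igH A B : width (igH A B) = `|width A - width B|.
Proof.
rewrite /width /igH /= maxr_absE minr_absE.
have -> : A.2 - A.1 - (B.2 - B.1) = - (A.1 - B.1 - (A.2 - B.2)) by ring.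
by rewrite normrN; field.
Qed.

Lemma dist_width_le A B : `|width A - width B| <= 2 * inorm (igH A B).
Proof.
have [le1 le2] := inorm_igH_le (lexx (inorm (igH A B))).
have := ler_normB (A.2 - B.2) (A.1 - B.1).
have -> : A.2 - B.2 - (A.1 - B.1) = width A - width B by rewrite /width; ring.
lra.
Qed.

End IntervalArithmetic.

Arguments width {R}.

Section EuclideanNorm.
Variables (R : realType) (n : nat).
Implicit Types (c : R) (u v w : 'rV[R]_n).

Definition dot u v : R := \sum_(i < n) u 0 i * v 0 i.

Definition norm1 v : R := \sum_(i < n) `|v 0 i|.

Lemma dotBr u v w : dot u (v - w) = dot u v - dot u w.
Proof. by rewrite /dot -sumrB; apply: eq_bigr => i _; rewrite !mxE mulrBr. Qed.

Lemma dotZl c u v : dot (c *: u) v = c * dot u v.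
Proof. by rewrite /dot mulr_sumr; apply: eq_bigr => k _; rewrite mxE mulrA. Qed.

Lemma dotNl u v : dot (- u) v = - dot u v.
Proof. by rewrite -scaleN1r dotZl mulN1r. Qed.

Lemma enorm_ge0 v : 0 <= enorm v.
Proof. exact: sqrtr_ge0. Qed.

Lemma enorm_sqr v : enorm v ^+ 2 = dot v v.
Proof.
rewrite sqr_sqrtr; last by apply: sumr_ge0 => i _; exact: sqr_ge0.
by apply: eq_bigr => i _; rewrite expr2.
Qed.

Lemma enormZ c v : enorm (c *: v) = `|c| * enorm v.
Proof.
rewrite /enorm (eq_bigr (fun i => c ^+ 2 * v 0 i ^+ 2)) => [|i _]; last by rewrite mxE exprMn.
by rewrite -mulr_sumr sqrtrM ?sqr_ge0 // sqrtr_sqr.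
Qed.

Lemma enormN v : enorm (- v) = enorm v.
Proof. by rewrite -scaleN1r enormZ normrN normr1 mul1r. Qed.

Lemma enorm_ebasis c (i : 'I_n) : enorm (c *: ebasis R i) = `|c|.
Proof.
rewrite enormZ /enorm (bigD1 i) //= big1 => [|j /negPf ji]; last by rewrite mxE ji expr0n.
by rewrite mxE eqxx expr1n addr0 sqrtr1 mulr1.
Qed.

Lemma normr_le_norm1 v i : `|v 0 i| <= norm1 v.
Proof. by rewrite /norm1 (bigD1 i) //= lerDl sumr_ge0. Qed.

Lemma enorm_le_norm1 v : enorm v <= norm1 v.
Proof.
have n1_ge0 : 0 <= norm1 v by apply: sumr_ge0.
rewrite -(ger0_norm n1_ge0) -sqrtr_sqr; apply: ler_wsqrtr.
rewrite expr2 {2}/norm1 mulr_sumr; apply: ler_sum => i _.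
by rewrite -real_normK ?num_real // expr2 mulrC ler_wpM2r // normr_le_norm1.
Qed.

Lemma enorm_sqr_convex u v (t : R) :
  enorm (u + t *: (v - u)) ^+ 2 =
  (1 - t) * enorm u ^+ 2 + t * enorm v ^+ 2 - t * (1 - t) * enorm (v - u) ^+ 2.
Proof.
rewrite !enorm_sqr /dot !mulr_sumr -big_split -sumrB /=.
by apply: eq_bigr => i _; rewrite !mxE; ring.
Qed.

Lemma enorm_sqr_subZ u v c :
  enorm (u - c *: v) ^+ 2 = enorm u ^+ 2 - 2 * c * dot u v + c ^+ 2 * enorm v ^+ 2.
Proof.
rewrite !enorm_sqr /dot !mulr_sumr -sumrB -big_split /=.
by apply: eq_bigr => i _; rewrite !mxE; ring.
Qed.

Lemma enorm_subZ_le u v (sigma L alpha : R) :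
  0 < sigma -> 0 < L -> 0 <= alpha <= 2 * sigma / L ^+ 2 ->
  sigma * enorm u ^+ 2 <= dot u v -> enorm v <= L * enorm u ->
  enorm (u - alpha *: v) <= enorm u.
Proof.
move=> s0 L0 /andP[a0 aL] mono lip.
rewrite -(ler_pXn2r (_ : (0 < 2)%N)) ?nnegrE ?enorm_ge0 // enorm_sqr_subZ.
have v2 : enorm v ^+ 2 <= L ^+ 2 * enorm u ^+ 2.
  by rewrite -exprMn !expr2; apply: ler_pM; rewrite ?enorm_ge0.
have aL2 : alpha * L ^+ 2 <= 2 * sigma by rewrite -ler_pdivlMr ?exprn_gt0.
have h1 := ler_wpM2l (mulr_ge0 a0 a0) v2.
have h2 := ler_wpM2r (mulr_ge0 a0 (sqr_ge0 (enorm u))) aL2.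
have h3 := ler_wpM2l a0 mono.
nra.
Qed.

End EuclideanNorm.

Section WeightedNorm.
Variables (R : realType) (n : nat).
Implicit Types (u : 'I_n -> R) (c : R) (d e : 'rV[R]_n).

Definition wnorm1 u e : R := \sum_(i < n) `|e 0 i| * u i.

Definition co_oriented u e : Prop := forall i, 0 <= e 0 i * u i.

Lemma wnorm1Z u c e : wnorm1 u (c *: e) = `|c| * wnorm1 u e.
Proof. by rewrite /wnorm1 mulr_sumr; apply: eq_bigr => k _; rewrite mxE normrM mulrA. Qed.

Lemma wnorm1_ebasis u c i : wnorm1 u (c *: ebasis R i) = `|c| * u i.
Proof.
rewrite /wnorm1 (bigD1 i) //= big1 ?addr0 => [|j /negPf ji].
  by rewrite !mxE eqxx mulr1.
by rewrite !mxE ji mulr0 normr0 mul0r.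
Qed.

Lemma dist_wnorm1_le u u' e c :
  (forall k, `|u k - u' k| <= c) -> `|wnorm1 u e - wnorm1 u' e| <= norm1 e * c.
Proof.
move=> uc; rewrite /wnorm1 -sumrB mulr_suml; apply: le_trans (ler_norm_sum _ _ _) _.
by apply: ler_sum => k _; rewrite -mulrBr normrM normr_id ler_wpM2l.
Qed.

Lemma co_orientedZ u e c : co_oriented u e -> 0 <= c -> co_oriented u (c *: e).
Proof. by move=> co c0 i; rewrite mxE -mulrA mulr_ge0. Qed.

Lemma co_oriented_sum_ge0 u e : co_oriented u e \/ co_oriented u (- e) ->
  0 <= \sum_(i < n) e 0 i * u i -> co_oriented u e.
Proof.
case=> [//|co] s0 i.
have co' k : 0 <= - (e 0 k * u k) by have := co k; rewrite mxE mulNr.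
have sum0 : \sum_(k < n) - (e 0 k * u k) = 0.
  apply/le_anti/andP; split; first by rewrite sumrN oppr_le0.
  by apply: sumr_ge0 => k _; exact: co'.
have := psumr_eq0P (fun k _ => co' k) sum0 (i := i) isT.
by move/eqP; rewrite oppr_eq0 => /eqP ->.
Qed.

Lemma co_oriented_sum_le0 u e : co_oriented u e \/ co_oriented u (- e) ->
  \sum_(i < n) e 0 i * u i <= 0 -> co_oriented u (- e).
Proof.
move=> co s0; apply: co_oriented_sum_ge0; first by rewrite opprK; case: co; [right|left].
by rewrite (eq_bigr (fun i => - (e 0 i * u i))) ?sumrN ?oppr_ge0 // => i _; rewrite mxE mulNr.
Qed.

Lemma not_co_oriented_gap u d : (forall k, 0 <= u k) ->
  ~ (co_oriented u d \/ co_oriented u (- d)) ->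
  exists j, 0 < `|d 0 j| * u j < wnorm1 u d.
Proof.
move=> u0 nco.
have [i di] : exists i, d 0 i * u i < 0.
  apply: contrapT => h; apply: nco; left => i; rewrite leNgt; apply/negP => hi.
  by apply: h; exists i.
have [j dj] : exists j, 0 < d 0 j * u j.
  apply: contrapT => h; apply: nco; right => j; rewrite mxE mulNr oppr_ge0 leNgt.
  by apply/negP => hj; apply: h; exists j.
have normE k : `|d 0 k| * u k = `|d 0 k * u k| by rewrite normrM (ger0_norm (u0 k)).
have ij : i != j by apply: contraTneq di => ->; rewrite -leNgt ltW.
exists j; rewrite normE gtr0_norm // dj /wnorm1 (bigD1 j) //= (bigD1 i) //=.
rewrite normE gtr0_norm // ltrDl ltr_wpDr ?sumr_ge0 // => [k _|]; first by rewrite mulr_ge0.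
by rewrite normE normr_gt0 (lt_eqF di).
Qed.

Lemma normr_flip_ebasis d i c (k : 'I_n) : 0 <= c ->
  `|((2 * c * d 0 i) *: ebasis R i - c *: d) 0 k| = c * `|d 0 k|.
Proof.
move=> c0; rewrite !mxE; case: eqP => [->|_].
  have -> : 2 * c * d 0 i * 1 - c * d 0 i = c * d 0 i by ring.
  by rewrite normrM ger0_norm.
by rewrite mulr0 sub0r normrN normrM ger0_norm.
Qed.

End WeightedNorm.

Section LinearIVF.
Variables (R : realType) (n : nat).
Implicit Types (g : 'I_n -> itv R) (c : R) (e : 'rV[R]_n).

Lemma linIVF_E g e :
  linIVF g e = (\sum_(i < n) Num.min (e 0 i * (g i).1) (e 0 i * (g i).2),
                \sum_(i < n) Num.max (e 0 i * (g i).1) (e 0 i * (g i).2)).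
Proof.
rewrite /linIVF [LHS]surjective_pairing; congr pair.
  by apply: (big_morph (fun A : itv R => A.1)).
by apply: (big_morph (fun A : itv R => A.2)).
Qed.

Lemma linIVF_scale g c e : 0 <= c ->
  linIVF g (c *: e) = (c * (linIVF g e).1, c * (linIVF g e).2).
Proof.
move=> c0; rewrite !linIVF_E /= !mulr_sumr.
by congr pair; apply: eq_bigr => i _; rewrite mxE -!mulrA ?minr_pMr ?maxr_pMr.
Qed.

Lemma linIVF_opp g e : linIVF g (- e) = (- (linIVF g e).2, - (linIVF g e).1).
Proof.
rewrite !linIVF_E /= -!sumrN.
by congr pair; apply: eq_bigr => i _; rewrite mxE !mulNr ?oppr_max ?oppr_min.
Qed.

Lemma linIVF_ebasis g c i : linIVF g (c *: ebasis R i) = ismul c (g i).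
Proof.
rewrite linIVF_E /ismul; congr pair; rewrite (bigD1 i) //= big1 ?addr0 ?mxE ?eqxx ?mulr1 //;
  by move=> j /negPf ji; rewrite !mxE ji mulr0 !mul0r ?minxx ?maxxx.
Qed.

Lemma linIVF_co_oriented g e : co_oriented (width \o g) e ->
  linIVF g e = (\sum_(i < n) e 0 i * (g i).1, \sum_(i < n) e 0 i * (g i).2).
Proof.
move=> co; rewrite linIVF_E.
have le i : e 0 i * (g i).1 <= e 0 i * (g i).2 by rewrite -subr_ge0 -mulrBr; exact: co.
by congr pair; apply: eq_bigr => i _; [rewrite min_l | rewrite max_r].
Qed.

Lemma width_linIVF g e : (forall i, is_itv (g i)) ->
  width (linIVF g e) = wnorm1 (width \o g) e.
Proof.
move=> gi; rewrite /width linIVF_E /wnorm1 /= -sumrB; apply: eq_bigr => i _.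
have gi' : (g i).1 - (g i).2 <= 0 by rewrite subr_le0; exact: gi.
by rewrite maxr_absE minr_absE -mulrBr normrM (ler0_norm gi'); field.
Qed.

Lemma dot_Wmap_co_oriented (w w' : R) g e : co_oriented (width \o g) e ->
  dot e (Wmap w w' g) = w * (linIVF g e).1 + w' * (linIVF g e).2.
Proof.
move=> co; rewrite linIVF_co_oriented //= /dot !mulr_sumr -big_split.
by apply: eq_bigr => i _ /=; rewrite mxE; ring.
Qed.

Lemma norm1_Wmap_sub_le (w w' : R) g g' : 0 <= w -> 0 <= w' -> w + w' = 1 ->
  norm1 (Wmap w w' g - Wmap w w' g') <= inormn (fun i => igH (g i) (g' i)).
Proof.
move=> w0 w'0 ww; apply: ler_sum => i _; rewrite !mxE.
have [le1 le2] := inorm_igH_le (lexx (inorm (igH (g i) (g' i)))).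
have -> : w * (g i).1 + w' * (g i).2 - (w * (g' i).1 + w' * (g' i).2) =
          w * ((g i).1 - (g' i).1) + w' * ((g i).2 - (g' i).2) by ring.
apply: le_trans (ler_normD _ _) _; rewrite !normrM (ger0_norm w0) (ger0_norm w'0).
apply: le_trans (lerD (ler_wpM2l w0 le1) (ler_wpM2l w'0 le2)) _.
by rewrite -mulrDl ww mul1r.
Qed.

End LinearIVF.

Section FirstOrderModel.
Variables (R : realType) (n : nat) (F : 'rV[R]_n -> itv R) (z : 'rV[R]_n).

Definition gH_first_order (g : 'I_n -> itv R) : Prop :=
  forall eps : R, 0 < eps -> exists2 delta : R, 0 < delta & forall e, enorm e < delta ->
    inorm (igH (igH (F (z + e)) (F z)) (linIVF g e)) <= eps * enorm e.

(* [A] and [ismul 1 (Le i)] are both gH-limits of the difference quotients of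
   [F] along [e_i]. *)
Lemma partial_gH_linIVF (Le : 'I_n -> itv R) (E : 'rV[R]_n -> itv R) (d0 : R) i A :
  0 < d0 ->
  (forall d, enorm d < d0 ->
     igH (igH (F (z + d)) (F z)) (linIVF Le d) = ismul (enorm d) (E d)) ->
  (forall eps, 0 < eps -> exists eta, 0 < eta /\
     forall d, 0 < enorm d < eta -> inorm (E d) < eps) ->
  is_partial_gH F z i A -> A = ismul 1 (Le i).
Proof.
move=> d0p hlin hE hA; apply: igH_small_eq => eps eps0.
have eps2 : 0 < eps / 2 by rewrite divr_gt0.
have [eta [eta0 heta]] := hE _ eps2.
have [dA [dA0 hdA]] := hA _ eps2.
near (at_right (0 : R)) => h.
have h0 : 0 < h by near: h; exact: nbhs_right_gt.
have nh : enorm (h *: ebasis R i) = h by rewrite enorm_ebasis gtr0_norm.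
set D := igH (F (z + h *: ebasis R i)) (F z).
have hD : inorm (igH D (ismul h (Le i))) <= h * (eps / 2).
  rewrite -linIVF_ebasis hlin nh; last by near: h; exact: nbhs_right_lt.
  rewrite inorm_ismul ?ler_wpM2l ?ltW //; apply: heta; rewrite nh h0 /=.
  by near: h; exact: nbhs_right_lt.
have hQ : inorm (igH A (ismul h^-1 D)) <= eps / 2.
  rewrite inorm_igHC ltW // hdA // gtr0_norm // h0 /=.
  by near: h; exact: nbhs_right_lt.
have hS : inorm (igH (ismul h^-1 D) (ismul h^-1 (ismul h (Le i)))) <= eps / 2.
  apply: le_trans (inorm_igH_ismul _ _ _) _; first by rewrite invr_ge0 ltW.
  by rewrite ler_pdivrMl // mulrC.
rewrite ismulA ?invr_ge0 ?(ltW h0) // mulVf ?gt_eqF // in hS.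
by have := igH_triangle A (ismul h^-1 D) (ismul 1 (Le i)); lra.
Unshelve. all: by end_near.
Qed.

Lemma gH_differentiable_first_order (g : 'I_n -> itv R) :
  gH_differentiable_at F z -> (forall i, is_partial_gH F z i (g i)) ->
  (forall i, is_itv (g i)) /\ gH_first_order g.
Proof.
case=> Le [E [d0 [d0p [hlin hE]]]] hg.
have gLe i : g i = ismul 1 (Le i) := partial_gH_linIVF d0p hlin hE (hg i).
split=> [i | eps eps0]; first by rewrite gLe ismulE ?ler01 // /is_itv /= !mul1r min_le_max.
have [eta [eta0 heta]] := hE _ eps0.
exists (Num.min d0 eta) => [|e]; first by rewrite lt_min d0p.
rewrite lt_min => /andP[ed0 eeta].
have -> : linIVF g e = linIVF Le e by apply: eq_bigr => i _; rewrite gLe ismul_ismul1.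
rewrite hlin // inorm_ismul ?enorm_ge0 // mulrC.
have [e0|e0] := eqVneq (enorm e) 0; first by rewrite e0 !mulr0.
by rewrite ler_wpM2r ?enorm_ge0 // ltW // heta // lt_def e0 enorm_ge0.
Qed.

Lemma width_first_order (g : 'I_n -> itv R) :
  (forall i, is_itv (g i)) -> gH_first_order g ->
  forall eps : R, 0 < eps -> exists2 delta : R, 0 < delta & forall e, enorm e < delta ->
    `| `|width (F (z + e)) - width (F z)| - wnorm1 (width \o g) e| <= eps * enorm e.
Proof.
move=> gi hg eps eps0; have [delta d0 hd] := hg (eps / 2) (divr_gt0 eps0 (ltr0Sn _ 1)).
exists delta => // e he; rewrite -width_igH -width_linIVF //.
apply: le_trans (dist_width_le _ _) _.
by have := hd e he; lra.
Qed.

End FirstOrderModel.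

Section StrongConvexity.
Variables (R : realType) (n : nat) (X : 'rV[R]_n -> Prop).
Hypothesis convX : convex_set X.

Definition strongly_convex_fun (f : 'rV[R]_n -> R) (sigma : R) : Prop :=
  forall x y (t : R), X x -> X y -> 0 <= t <= 1 ->
    f (x + t *: (y - x)) <=
    f x + t * (f y - f x) - sigma / 2 * (t * (1 - t)) * enorm (y - x) ^+ 2.

Lemma convex_set_segment x y (t : R) : X x -> X y -> 0 <= t <= 1 -> X (x + t *: (y - x)).
Proof.
move=> Xx Xy t01.
have -> : x + t *: (y - x) = t *: y + (1 - t) *: x by apply/rowP => j; rewrite !mxE; ring.
exact: convX.
Qed.

Lemma strongly_convex_fun_add_sqr (a f : 'rV[R]_n -> R) sigma :
  (forall x y (t : R), X x -> X y -> 0 <= t <= 1 ->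
     a (x + t *: (y - x)) <= t * a y + (1 - t) * a x) ->
  (forall x, X x -> f x = a x + 2^-1 * enorm x ^+ 2 * sigma) ->
  strongly_convex_fun f sigma.
Proof.
move=> cvx fE x y t Xx Xy t01.
have Xp := convex_set_segment Xx Xy t01.
rewrite !fE // enorm_sqr_convex -subr_ge0.
have -> : forall ap ax ay nx ny nd : R,
    ax + 2^-1 * nx * sigma + t * (ay + 2^-1 * ny * sigma - (ax + 2^-1 * nx * sigma))
    - sigma / 2 * (t * (1 - t)) * nd
    - (ap + 2^-1 * ((1 - t) * nx + t * ny - t * (1 - t) * nd) * sigma)
    = t * ay + (1 - t) * ax - ap by move=> *; ring.
by rewrite subr_ge0 cvx.
Qed.

Lemma convex_IVF_endpoints (G : 'rV[R]_n -> itv R) x y (t : R) :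
  (forall x, X x -> is_itv (G x)) -> convex_IVF_on X G -> X x -> X y -> 0 <= t <= 1 ->
  (G (x + t *: (y - x))).1 <= t * (G y).1 + (1 - t) * (G x).1 /\
  (G (x + t *: (y - x))).2 <= t * (G y).2 + (1 - t) * (G x).2.
Proof.
move=> Gitv Gcvx Xx Xy /andP[t0 t1].
have -> : x + t *: (y - x) = t *: y + (1 - t) *: x by apply/rowP => j; rewrite !mxE; ring.
have [] := Gcvx y x t Xy Xx; first by rewrite t0 t1.
rewrite /iadd !ismulE ?subr_ge0 //= !min_l ?max_r //; exact: Gitv.
Qed.

Lemma strongly_convex_on_endpoints (F : 'rV[R]_n -> itv R) :
  strongly_convex_on X F -> exists2 sigma, 0 < sigma &
    strongly_convex_fun (fun x => (F x).1) sigma /\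
    strongly_convex_fun (fun x => (F x).2) sigma.
Proof.
case=> G [sigma [s0 [Gitv [Gcvx FE]]]]; exists sigma => //.
have FE' x : X x -> F x = ((G x).1 + 2^-1 * enorm x ^+ 2 * sigma,
                            (G x).2 + 2^-1 * enorm x ^+ 2 * sigma).
  by move=> Xx; rewrite FE // /iadd /ismul /= minxx maxxx.
split.
- apply: (strongly_convex_fun_add_sqr (a := fun x => (G x).1)) => [x y t|x /FE' ->] //.
  by move=> Xx Xy t01; have [] := convex_IVF_endpoints Gitv Gcvx Xx Xy t01.
- apply: (strongly_convex_fun_add_sqr (a := fun x => (G x).2)) => [x y t|x /FE' ->] //.
  by move=> Xx Xy t01; have [] := convex_IVF_endpoints Gitv Gcvx Xx Xy t01.
Qed.

End StrongConvexity.

Section ModelMonotonicity.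
Variables (R : realType) (n : nat) (X : 'rV[R]_n -> Prop) (F : 'rV[R]_n -> itv R).
Variables (g : 'rV[R]_n -> 'I_n -> itv R) (sigma : R).
Hypothesis sigma_gt0 : 0 < sigma.
Hypothesis scF1 : strongly_convex_fun X (fun x => (F x).1) sigma.
Hypothesis scF2 : strongly_convex_fun X (fun x => (F x).2) sigma.
Hypothesis g_model : forall x, X x -> gH_first_order F x (g x).

Lemma igH_segment_add_le x y (t : R) : X x -> X y -> 0 <= t <= 1 ->
  (igH (F (x + t *: (y - x))) (F x)).1 + (igH (F (y + t *: (x - y))) (F y)).2 <=
  - (sigma * (t * (1 - t)) * enorm (y - x) ^+ 2).
Proof.
move=> Xx Xy t01; have exy : enorm (x - y) = enorm (y - x) by rewrite -opprB enormN.
have := scF1 Xx Xy t01; have := scF1 Xy Xx t01.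
have := scF2 Xx Xy t01; have := scF2 Xy Xx t01.
by rewrite exy /igH /= => *; apply: min_add_max_le; lra.
Qed.

(* Expand [F] at [x] along [tau (y - x)] and at [y] along [tau (x - y)]; strong
   convexity of the endpoints bounds the sum of the two increments, then divide
   by [tau] and let [tau] and [eps] go to [0]. *)
Lemma linIVF_model_monotone x y : X x -> X y ->
  sigma * enorm (y - x) ^+ 2 <= - (linIVF (g x) (y - x)).1 - (linIVF (g y) (x - y)).2.
Proof.
move=> Xx Xy; set l := enorm (y - x).
have l0 : 0 <= l := enorm_ge0 _.
have exy : enorm (x - y) = l by rewrite -opprB enormN.
apply: (ler_addgt0_scaled (c := sigma * l ^+ 2 + 2 * l)) => [|eps eps0].
  by rewrite addr_ge0 ?mulr_ge0 ?sqr_ge0 // ltW.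
have [dx dx0 hx] := g_model Xx eps0.
have [dy dy0 hy] := g_model Xy eps0.
have m0 : 0 < Num.min dx dy by rewrite lt_min dx0 dy0.
have l1 : 0 < l + 1 by lra.
near (at_right (0 : R)) => tau.
have t0 : 0 < tau by near: tau; exact: nbhs_right_gt.
have teps : tau <= eps by near: tau; exact: nbhs_right_le.
have t1 : tau <= 1 by near: tau; exact: nbhs_right_le.
have tl : tau * l < Num.min dx dy.
  have : tau < Num.min dx dy / (l + 1) by near: tau; exact: nbhs_right_lt (divr_gt0 m0 l1).
  rewrite ltr_pdivlMr // mulrDr mulr1 => h.
  by apply: le_lt_trans h; rewrite lerDl ltW.
move: tl; rewrite lt_min => /andP[tlx tly].
have ex : enorm (tau *: (y - x)) = tau * l by rewrite enormZ gtr0_norm.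
have ey : enorm (tau *: (x - y)) = tau * l by rewrite enormZ gtr0_norm // exy.
have := hx (tau *: (y - x)); rewrite ex => /(_ tlx) /inorm_igH_le [+ _].
have := hy (tau *: (x - y)); rewrite ey => /(_ tly) /inorm_igH_le [_ +].
rewrite !linIVF_scale ?(ltW t0) //= !ler_norml => /andP[hy2 _] /andP[hx1 _].
have t01 : 0 <= tau <= 1 by rewrite (ltW t0) t1.
have := igH_segment_add_le Xx Xy t01; rewrite -/l /igH /= => key.
rewrite -(ler_pM2l t0).
have sl0 : 0 <= sigma * l ^+ 2 by rewrite mulr_ge0 ?sqr_ge0 // ltW.
have := ler_wpM2l (ltW t0) (ler_wpM2r sl0 teps).
lra.
Unshelve. all: by end_near.
Qed.

Lemma linIVF_monotone x y : X x -> X y ->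
  sigma * enorm (y - x) ^+ 2 <= (linIVF (g y) (y - x)).1 - (linIVF (g x) (y - x)).1 /\
  sigma * enorm (y - x) ^+ 2 <= (linIVF (g y) (y - x)).2 - (linIVF (g x) (y - x)).2.
Proof.
move=> Xx Xy; have exy : x - y = - (y - x) by rewrite opprB.
have := linIVF_model_monotone Xx Xy; have := linIVF_model_monotone Xy Xx.
rewrite exy !linIVF_opp enormN /= !opprK; lra.
Qed.

Lemma dot_Wmap_monotone_co_oriented (w w' : R) x y :
  0 <= w -> 0 <= w' -> w + w' = 1 -> X x -> X y ->
  (co_oriented (width \o g x) (y - x) /\ co_oriented (width \o g y) (y - x)) \/
  (co_oriented (width \o g x) (x - y) /\ co_oriented (width \o g y) (x - y)) ->
  sigma * enorm (y - x) ^+ 2 <=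
  dot (y - x) (Wmap w w' (g y)) - dot (y - x) (Wmap w w' (g x)).
Proof.
move=> w0 w'0 ww Xx Xy co; rewrite -[sigma * _]mul1r -ww mulrDl.
have [m1 m2] := linIVF_monotone Xx Xy.
have := ler_wpM2l w0 m1; have := ler_wpM2l w'0 m1.
have := ler_wpM2l w0 m2; have := ler_wpM2l w'0 m2.
case: co => [[cx cy] | [cx cy]]; first by rewrite !dot_Wmap_co_oriented //; lra.
have dotN (h : 'I_n -> itv R) : dot (y - x) (Wmap w w' h) = - dot (x - y) (Wmap w w' h).
  by rewrite -dotNl opprB.
have exy : x - y = - (y - x) by rewrite opprB.
by rewrite !dotN !dot_Wmap_co_oriented // exy !linIVF_opp /=; lra.
Qed.

End ModelMonotonicity.

Section IncrementDichotomy.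
Variables (R : realType) (n : nat).

(* For [v := 2 a d_i e_i], the vector [v - a d] has the coordinate moduli of
   [a d].  The increment of [r] from [z] to [z + v] passes through [z + a d]
   and splits into two increments modelled by [a * wnorm1 _ d], whose moduli
   either add up or subtract. *)
Lemma increment_dichotomy (r : 'rV[R]_n -> R) (u u' : 'I_n -> R) (z d : 'rV[R]_n) i
    (a eps : R) :
  0 < a -> 0 <= eps ->
  (forall e, enorm e <= 2 * a * norm1 d ->
     `| `|r (z + e) - r z| - wnorm1 u e| <= eps * enorm e) ->
  (forall e, enorm e <= 2 * a * norm1 d ->
     `| `|r (z + a *: d + e) - r (z + a *: d)| - wnorm1 u' e| <= eps * enorm e) ->
  wnorm1 u d + wnorm1 u' d - 4 * eps * norm1 d <= 2 * (`|d 0 i| * u i) \/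
  2 * (`|d 0 i| * u i) <= `|wnorm1 u d - wnorm1 u' d| + 4 * eps * norm1 d.
Proof.
move=> a0 eps0 hz hz'.
set S1 := norm1 d; set B := `|d 0 i| * u i; set A := wnorm1 u d; set A' := wnorm1 u' d.
have aS : a * `|d 0 i| <= a * S1 := ler_wpM2l (ltW a0) (normr_le_norm1 d i).
have aN : a * enorm d <= a * S1 := ler_wpM2l (ltW a0) (enorm_le_norm1 d).
set v := (2 * a * d 0 i) *: ebasis R i.
have flip k := normr_flip_ebasis d i k (ltW a0).
have n2a : `|2 * a * d 0 i| = 2 * a * `|d 0 i| by rewrite !normrM normr_nat gtr0_norm.
have nv : enorm v = 2 * a * `|d 0 i| by rewrite enorm_ebasis n2a.
have nad : enorm (a *: d) = a * enorm d by rewrite enormZ gtr0_norm.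
have nvd : enorm (v - a *: d) <= a * S1.
  apply: le_trans (enorm_le_norm1 _) _.
  by rewrite /norm1 (eq_bigr _ (fun k _ => flip k)) -mulr_sumr.
have aS0 : 0 <= a * S1 by rewrite mulr_ge0 ?sumr_ge0 // ltW.
have h1 : enorm v <= 2 * a * S1 by rewrite nv; lra.
have h2 : enorm (v - a *: d) <= 2 * a * S1 by lra.
have h3 : enorm (a *: d) <= 2 * a * S1 by rewrite nad; lra.
have wv : wnorm1 u v = 2 * a * B by rewrite wnorm1_ebasis n2a /B; ring.
have wvd : wnorm1 u' (v - a *: d) = a * A'.
  by rewrite /A' /wnorm1 mulr_sumr; apply: eq_bigr => k _; rewrite flip mulrA.
have wad : wnorm1 u (a *: d) = a * A by rewrite wnorm1Z (gtr0_norm a0).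
have zv : z + a *: d + (v - a *: d) = z + v by apply/rowP => k; rewrite !mxE; ring.
have := hz _ h1; have := hz' _ h2; have := hz _ h3.
rewrite wv wvd wad zv nv nad => R3 R2 R1.
have err : eps * (2 * a * `|d 0 i| + enorm (v - a *: d) + a * enorm d) <= eps * (4 * a * S1).
  by rewrite ler_wpM2l //; lra.
suff : a * (A + A' - 4 * eps * S1) <= a * (2 * B) \/
       a * (2 * B) <= a * (`|A - A'| + 4 * eps * S1) by rewrite !ler_pM2l.
have sumE : r (z + v) - r z = (r (z + v) - r (z + a *: d)) + (r (z + a *: d) - r z).
  by rewrite addrA subrK.
have [same|opp] := normrD_cases (r (z + v) - r (z + a *: d)) (r (z + a *: d) - r z).
  by left; move: R1 R2 R3; rewrite sumE same !ler_norml; lra.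
right; move: R1; rewrite sumE opp ler_norml => /andP[R1l _].
have := ler_distDD `|r (z + v) - r (z + a *: d)| (a * A') (a * A) `|r (z + a *: d) - r z|.
by rewrite -mulrBr normrM gtr0_norm // (distrC A') (distrC (a * A)); lra.
Qed.

End IncrementDichotomy.

Section GaugeTwoPoints.
Variable R : realType.
Local Open Scope classical_set_scope.

Definition separated (r : R) (S : set R) : Prop :=
  forall s t, S s -> S t -> s != t -> r <= `|s - t|.

Lemma separated_open_compl r S : 0 < r -> separated r S -> open (~` S).
Proof.
move=> r0 sep; rewrite openE => x Sx; apply/nbhs_ballP.
have [[s [Ss xs]]|far] := pselect (exists s, S s /\ `|x - s| < r / 2).
  have xs0 : 0 < `|x - s|.
    by rewrite normr_gt0 subr_eq0; apply: contraPneq Sx => ->.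
  exists `|x - s| => // y /= xy Sy.
  have ys : y != s by apply: contraTneq xy => ->; rewrite ltxx.
  move: xy; rewrite /ball /= distrC => xy.
  have := sep _ _ Sy Ss ys; have := ler_distD x y s; lra.
exists (r / 2) => [|y /=]; first exact: divr_gt0.
by rewrite /ball /= => xy Sy; apply: far; exists y.
Qed.

Lemma separated_dense_compl r S : 0 < r -> separated r S -> dense (~` S).
Proof.
move=> r0 sep O [p Op] oO.
have /nbhs_ballP[e /= e0 pO] : nbhs p O by move: oO; rewrite openE; exact.
have [me mr] : Num.min e r <= e /\ Num.min e r <= r by rewrite !ge_min !lexx orbT.
have m0 : 0 < Num.min e r by rewrite lt_min e0 r0.
set q := p + Num.min e r / 2.
have pq : `|p - q| = Num.min e r / 2.
  by rewrite /q opprD addrA subrr add0r normrN gtr0_norm ?divr_gt0.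
have [Sp|Sp] := pselect (S p); last by exists p.
exists q; split=> [|Sq]; first by apply: pO; rewrite /ball /= pq; lra.
have pq' : p != q by rewrite -subr_eq0 -normr_eq0 pq gt_eqF ?divr_gt0.
by have := sep _ _ Sp Sq pq'; rewrite pq; lra.
Qed.

(* The points where the gauge exceeds [1/(k+1)] form a [1/(k+1)]-separated set,
   hence a closed set with empty interior; these sets cannot cover [[a, b]]
   by Baire's theorem. *)
Lemma gauge_two_points (a b : R) (delta : R -> R) : a < b ->
  (forall t, a <= t <= b -> 0 < delta t) ->
  exists t t', [/\ a <= t, t < t', t' <= b, t' - t < delta t & t' - t < delta t'].
Proof.
move=> ab dpos; apply: contrapT => none.
pose S (k : nat) := [set t | a <= t <= b /\ k.+1%:R^-1 <= delta t].
have sepS k : separated k.+1%:R^-1 (S k).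
  move=> s t [/andP[a_s s_b] ks] [/andP[a_t t_b] kt].
  wlog lst : s t a_s s_b ks a_t t_b kt / s < t.
    move=> wl st; have [lst|lts] := ltP s t; first exact: wl.
    have ts : t != s by rewrite eq_sym.
    by rewrite distrC; apply: wl; rewrite // lt_neqAle ts lts.
  move=> _; rewrite distrC gtr0_norm ?subr_gt0 //.
  have [dl|dl] := leP (delta s) (t - s); first exact: le_trans ks dl.
  have [dt|dt] := leP (delta t) (t - s); first exact: le_trans kt dt.
  by case: none; exists s, t; split; rewrite // ltW.
have kpos k : 0 < k.+1%:R^-1 :> R by rewrite invr_gt0 ltr0n.
have odS k : open (~` S k) /\ dense (~` S k).
  by split; [exact: separated_open_compl (kpos k) (sepS k)
             | exact: separated_dense_compl (kpos k) (sepS k)].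
have [|c [abc Sc]] := Baire odS (O := ball ((a + b) / 2) ((b - a) / 2)) _ (ball_open _ _).
  by exists ((a + b) / 2); apply: ballxx; rewrite divr_gt0 // subr_gt0.
have cab : a <= c <= b.
  by move: abc; rewrite /ball /= ltr_norml => /andP[? ?]; apply/andP; split; lra.
pose k := Num.Def.archi_bound (delta c)^-1.
have kdc : k.+1%:R^-1 <= delta c.
  rewrite -(invrK (delta c)) lef_pV2 ?posrE ?invr_gt0 ?dpos ?ltr0n //.
  apply: ltW; apply: lt_le_trans (archi_boundP _) _; first by rewrite invr_ge0 ltW ?dpos.
  by rewrite ler_nat.
by apply: (Sc k); split.
Qed.

End GaugeTwoPoints.

Section LipschitzIVT.
Variable R : realType.
Local Open Scope classical_set_scope.

Lemma lipschitz_within_continuous (A : set R) (f : R -> R) (K : R) :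
  (forall x y, A x -> A y -> `|f x - f y| <= K * `|x - y|) -> {within A, continuous f}.
Proof.
move=> fK; apply/subspace_continuousP => x Ax; apply/cvgrPdist_lt => e e0.
have K1 : 0 < `|K| + 1 by rewrite ltr_wpDl.
rewrite /within; apply/nbhs_ballP; exists (e / (`|K| + 1)); first exact: divr_gt0.
move=> y; rewrite /ball /= => xy Ay; apply: le_lt_trans (fK _ _ Ax Ay) _.
have KK : K <= `|K| + 1 by have := ler_norm K; lra.
rewrite ltr_pdivlMr // mulrC in xy.
exact: le_lt_trans (ler_wpM2r (normr_ge0 (x - y)) KK) xy.
Qed.

Lemma lipschitz_IVT (f : R -> R) (K a b v : R) : a <= b ->
  (forall x y, a <= x <= b -> a <= y <= b -> `|f x - f y| <= K * `|x - y|) ->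
  Num.min (f a) (f b) <= v <= Num.max (f a) (f b) ->
  exists2 c, a <= c <= b & f c = v.
Proof.
move=> ab fK fv; have [|c] := IVT ab _ fv.
  by apply: (lipschitz_within_continuous (K := K)) => x y; rewrite /= !in_itv; exact: fK.
by rewrite in_itv /=; exists c.
Qed.

End LipschitzIVT.

Section SegmentCoOrientation.
Variables (R : realType) (n : nat) (r : 'rV[R]_n -> R) (x d : 'rV[R]_n).
Variables (u : R -> 'I_n -> R) (K : R).
Hypothesis u_ge0 : forall t : R, 0 <= t <= 1 -> forall k, 0 <= u t k.
Hypothesis u_lip : forall t t' : R, 0 <= t <= 1 -> 0 <= t' <= 1 -> forall k,
  `|u t k - u t' k| <= K * `|t - t'|.
Hypothesis r_model : forall t : R, 0 <= t <= 1 -> forall eps : R, 0 < eps ->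
  exists2 delta : R, 0 < delta & forall e, enorm e < delta ->
    `| `|r (x + t *: d + e) - r (x + t *: d)| - wnorm1 (u t) e| <= eps * enorm e.

Let model_within (t rad eps : R) := forall e, enorm e <= rad ->
  `| `|r (x + t *: d + e) - r (x + t *: d)| - wnorm1 (u t) e| <= eps * enorm e.

Lemma segment_weights_near t0 c : 0 <= t0 <= 1 -> 0 < c ->
  exists a b, [/\ a < b, 0 <= a, b <= 1 &
    forall t, a <= t <= b -> 0 <= t <= 1 /\ forall k, `|u t k - u t0 k| <= c].
Proof.
move=> t0i c0; have K1 : 0 < `|K| + 1 by rewrite ltr_wpDl.
have [a [b [ab a0 b1 near_t0]]] := exists_subinterval01 t0i (divr_gt0 c0 K1).
exists a, b; split=> // t tab; have ti : 0 <= t <= 1 by case/andP: tab => ? ?; lra.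
split=> // k; apply: le_trans (u_lip ti t0i k) _.
have := near_t0 t tab; rewrite ler_pdivlMr //.
by have := ler_norm K; have := normr_ge0 (t - t0); nra.
Qed.

Lemma segment_two_points a b eps : a < b -> 0 <= a -> b <= 1 -> 0 < eps -> 0 < norm1 d ->
  exists t t', [/\ a <= t, t < t', t' <= b,
    model_within t (2 * (t' - t) * norm1 d) eps &
    model_within t' (2 * (t' - t) * norm1 d) eps].
Proof.
move=> ab a0 b1 eps0 S10.
have gauge (t : R) : exists delta, 0 < delta /\ (0 <= t <= 1 -> forall e, enorm e < delta ->
    `| `|r (x + t *: d + e) - r (x + t *: d)| - wnorm1 (u t) e| <= eps * enorm e).
  have [ti|ti] := pselect (0 <= t <= 1); last by exists 1.
  by have [delta ? ?] := r_model ti eps0; exists delta.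
have [delta hdelta] := choice gauge.
have [t [t' [a_t tt' t'b dt dt']]] :=
  gauge_two_points (delta := fun t => delta t / (2 * norm1 d)) ab
    (fun t _ => divr_gt0 (proj1 (hdelta t)) (mulr_gt0 (ltr0Sn _ _) S10)).
have within s : a <= s <= b -> t' - t < delta s / (2 * norm1 d) ->
    model_within s (2 * (t' - t) * norm1 d) eps.
  move=> /andP[a_s s_b]; rewrite ltr_pdivlMr ?mulr_gt0 // => cs e ne.
  by apply: (proj2 (hdelta s)); [apply/andP; split; lra | lra].
by exists t, t'; split=> //; apply: within => //; apply/andP; split; lra.
Qed.

(* If the orientation fails at [t0], some coordinate carries a fraction
   [B t0] of the weighted norm [A t0] strictly between [0] and [A t0]; near
   [t0] this persists, which contradicts both alternatives of
   [increment_dichotomy]. *)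
Lemma segment_co_oriented (t0 : R) : 0 <= t0 <= 1 ->
  co_oriented (u t0) d \/ co_oriented (u t0) (- d).
Proof.
move=> t0i; apply: contrapT => nco.
have [j /andP[B0 BA]] := not_co_oriented_gap (u_ge0 t0i) nco.
pose B (t : R) : R := `|d 0 j| * u t j; pose A (t : R) : R := wnorm1 (u t) d.
set S1 := norm1 d.
have dj0 : 0 < `|d 0 j|.
  by rewrite lt_def normr_ge0 andbT; apply: contraTneq B0 => ->; rewrite mul0r ltxx.
have S10 : 0 < S1 := lt_le_trans dj0 (normr_le_norm1 _ _).
pose kap := Num.min (B t0) (A t0 - B t0).
have [kB kA] : kap <= B t0 /\ kap <= A t0 - B t0 by rewrite !ge_min !lexx orbT.
have kap0 : 0 < kap by rewrite lt_min subr_gt0 B0 BA.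
have [a [b [ab a0 b1 near_t0]]] :=
  segment_weights_near t0i (divr_gt0 kap0 (mulr_gt0 (ltr0Sn _ 3) S10)).
have e4 : S1 * (kap / (4 * S1)) = kap / 4 by field; rewrite gt_eqF.
have close t : a <= t <= b -> `|A t - A t0| <= kap / 4 /\ `|B t - B t0| <= kap / 4.
  move=> /near_t0[_ ut]; rewrite -e4; split; first exact: dist_wnorm1_le.
  by rewrite -mulrBr normrM normr_id ler_pM ?normr_le_norm1.
have eps0 : 0 < kap / (16 * S1) by rewrite divr_gt0 // mulr_gt0.
have [t [t' [a_t tt' t'b mt mt']]] := segment_two_points ab a0 b1 eps0 S10.
have xt' : x + t' *: d = x + t *: d + (t' - t) *: d by apply/rowP => k; rewrite !mxE; ring.
rewrite /model_within xt' in mt'.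
have c0 : 0 < t' - t by rewrite subr_gt0.
have dich := increment_dichotomy j c0 (ltW eps0) mt mt'.
have [At Bt] : `|A t - A t0| <= kap / 4 /\ `|B t - B t0| <= kap / 4.
  by apply: close; rewrite a_t (le_trans (ltW tt')).
have [At' _] : `|A t' - A t0| <= kap / 4 /\ `|B t' - B t0| <= kap / 4.
  by apply: close; rewrite t'b (le_trans a_t (ltW tt')).
have eS : 4 * (kap / (16 * S1)) * S1 = kap / 4 by field; rewrite gt_eqF.
have tri : `|A t - A t'| <= kap / 2.
  by apply: le_trans (ler_distD (A t0) _ _) _; rewrite (distrC (A t0)); lra.
rewrite -/S1 eS -/(A t) -/(A t') -/(B t) in dich; move: At Bt At'; rewrite !ler_norml.
by case: dich; lra.
Qed.

End SegmentCoOrientation.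

Section WeightedGradientMonotone.
Variables (R : realType) (n : nat) (X : 'rV[R]_n -> Prop) (F : 'rV[R]_n -> itv R).
Variables (g : 'rV[R]_n -> 'I_n -> itv R) (sigma M w w' : R).
Hypothesis convX : convex_set X.
Hypothesis sigma_gt0 : 0 < sigma.
Hypothesis scF1 : strongly_convex_fun X (fun x => (F x).1) sigma.
Hypothesis scF2 : strongly_convex_fun X (fun x => (F x).2) sigma.
Hypothesis g_itv : forall x, X x -> forall i, is_itv (g x i).
Hypothesis g_model : forall x, X x -> gH_first_order F x (g x).
Hypothesis g_lip : forall x y, X x -> X y ->
  inormn (fun i => igH (g x i) (g y i)) <= M * enorm (x - y).
Hypotheses (w_ge0 : 0 <= w) (w'_ge0 : 0 <= w') (ww' : w + w' = 1).
Variables (x1 x2 : 'rV[R]_n).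
Hypotheses (X1 : X x1) (X2 : X x2).

Let d := x2 - x1.
Let z (t : R) := x1 + t *: d.
Let u (t : R) := width \o g (z t).

Let Xz t : 0 <= t <= 1 -> X (z t).
Proof. exact: convex_set_segment. Qed.

Lemma width_lipschitz_segment t t' : 0 <= t <= 1 -> 0 <= t' <= 1 -> forall k,
  `|u t k - u t' k| <= 2 * M * enorm d * `|t - t'|.
Proof.
move=> ti ti' k; apply: le_trans (dist_width_le _ _) _.
have zE : z t - z t' = (t - t') *: d by apply/rowP => j; rewrite !mxE; ring.
have := g_lip (Xz ti) (Xz ti'); rewrite zE enormZ /inormn (bigD1 k) //=.
have : 0 <= \sum_(j < n | j != k) inorm (igH (g (z t) j) (g (z t') j)).
  by apply: sumr_ge0 => j _; exact: inorm_ge0.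
lra.
Qed.

Let u_ge0 t : 0 <= t <= 1 -> forall k, 0 <= u t k.
Proof. by move=> ti k; rewrite /u /= subr_ge0; exact: g_itv (Xz ti) k. Qed.

Lemma segment_width_co_oriented t : 0 <= t <= 1 ->
  co_oriented (u t) d \/ co_oriented (u t) (- d).
Proof.
apply: (@segment_co_oriented _ _ (width \o F) x1 d u (2 * M * enorm d)).
- exact: u_ge0.
- exact: width_lipschitz_segment.
- move=> s si eps eps0.
  exact: width_first_order (g_itv (Xz si)) (g_model (Xz si)) eps eps0.
Qed.

Let dW (t : R) := dot d (Wmap w w' (g (z t))).
Let dwidth (t : R) := \sum_(k < n) d 0 k * u t k.

Lemma dot_Wmap_segment_increment s s' : 0 <= s <= s' -> s' <= 1 ->
  (0 <= dwidth s /\ 0 <= dwidth s') \/ (dwidth s <= 0 /\ dwidth s' <= 0) ->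
  sigma * (s' - s) * enorm d ^+ 2 <= dW s' - dW s.
Proof.
move=> /andP[s0 ss'] s'1 sgn.
have [<-|lt] := eqVneq s s'; first by rewrite !subrr mulr0 mul0r.
have c0 : 0 < s' - s by rewrite subr_gt0 lt_def eq_sym lt ss'.
have si : 0 <= s <= 1 by rewrite s0 (le_trans ss').
have s'i : 0 <= s' <= 1 by rewrite s'1 (le_trans s0).
have [o o'] := (segment_width_co_oriented si, segment_width_co_oriented s'i).
have zE : z s' - z s = (s' - s) *: d by apply/rowP => j; rewrite !mxE; ring.
have zE' : z s - z s' = (s' - s) *: - d by apply/rowP => j; rewrite !mxE; ring.
have co : (co_oriented (u s) ((s' - s) *: d) /\ co_oriented (u s') ((s' - s) *: d)) \/
          (co_oriented (u s) ((s' - s) *: - d) /\ co_oriented (u s') ((s' - s) *: - d)).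
  case: sgn => [[p p']|[p p']]; [left|right]; split; apply: co_orientedZ (ltW c0).
  - exact: co_oriented_sum_ge0.
  - exact: co_oriented_sum_ge0.
  - exact: co_oriented_sum_le0.
  - exact: co_oriented_sum_le0.
have := dot_Wmap_monotone_co_oriented sigma_gt0 scF1 scF2 g_model w_ge0 w'_ge0 ww' (Xz si) (Xz s'i).
rewrite zE zE' => /(_ co); rewrite !dotZl enormZ gtr0_norm // exprMn -mulrBr => h.
rewrite -(ler_pM2l c0); apply: le_trans h.
by rewrite le_eqVlt; apply/orP; left; apply/eqP; ring.
Qed.

Lemma dwidth_lipschitz t t' : 0 <= t <= 1 -> 0 <= t' <= 1 ->
  `|dwidth t - dwidth t'| <= norm1 d * (2 * M * enorm d) * `|t - t'|.
Proof.
move=> ti ti'; rewrite /dwidth -sumrB -mulrA /norm1 mulr_suml.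
apply: le_trans (ler_norm_sum _ _ _) _; apply: ler_sum => k _.
by rewrite -mulrBr normrM ler_wpM2l // width_lipschitz_segment.
Qed.

(* [x |-> <d, W (g x)>] increases at rate [sigma |d|^2] on every piece of the
   segment where [dwidth] keeps its sign; the IVT cuts the segment at a zero of
   [dwidth] into at most two such pieces. *)
Lemma dot_Wmap_strongly_monotone :
  sigma * enorm (x2 - x1) ^+ 2 <= dot (x2 - x1) (Wmap w w' (g x2) - Wmap w w' (g x1)).
Proof.
have z0 : z 0 = x1 by rewrite /z scale0r addr0.
have z1 : z 1 = x2 by rewrite /z scale1r /d addrC subrK.
have -> : dot (x2 - x1) (Wmap w w' (g x2) - Wmap w w' (g x1)) = dW 1 - dW 0.
  by rewrite dotBr /dW z0 z1.
rewrite -/d.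
have i01 : (0 : R) <= (0 : R) <= 1 by lra.
have [pp|pn] := leP 0 (dwidth 0 * dwidth 1).
  have := dot_Wmap_segment_increment i01 (lexx 1) (mulr_ge0_cases pp).
  by rewrite subr0 mulr1.
have [c c01 dwidth_c] := lipschitz_IVT ler01 dwidth_lipschitz (mulr_le0_min_max (ltW pn)).
have [c0 c1] := andP c01.
have sc : 0 <= dwidth 0 * dwidth c /\ 0 <= dwidth c * dwidth 1.
  by rewrite dwidth_c mulr0 mul0r.
have i0c : (0 : R) <= (0 : R) <= c by rewrite lexx c0.
have := dot_Wmap_segment_increment c01 (lexx 1) (mulr_ge0_cases sc.2).
have := dot_Wmap_segment_increment i0c c1 (mulr_ge0_cases sc.1).
lra.
Qed.

End WeightedGradientMonotone.

Theorem theorem5p5 (R : realType) (n : nat) (w w' : R)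
  (hw : 0 <= w <= 1) (hw' : 0 <= w' <= 1) (hww : w + w' = 1)
  (X : 'rV[R]_n -> Prop) (F : 'rV[R]_n -> itv R) (gF : 'rV[R]_n -> 'I_n -> itv R)
  (hXne : exists x, X x) (hXcvx : convex_set X)
  (hF : is_IVF F)
  (hsc : strongly_convex_on X F)
  (hdiff : forall x, X x -> gH_differentiable_at F x)
  (hgrad : is_gH_gradient X F gF)
  (hlip : gH_Lipschitz_gradient_on X gF) :
  exists sigma L : R, 0 < sigma /\ 0 < L /\
    forall xb, efficient X F xb ->
    forall alpha : R, 0 <= alpha <= 2 * sigma / L ^+ 2 ->
    forall x, X x ->
      enorm ((x - alpha *: Wmap w w' (gF x)) - (xb - alpha *: Wmap w w' (gF xb)))
        <= enorm (x - xb).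
Proof.
have [sigma sigma_gt0 [sc1 sc2]] := strongly_convex_on_endpoints hXcvx hsc.
have [M [M_gt0 lip]] := hlip.
have model x (Xx : X x) := gH_differentiable_first_order (hdiff x Xx) (hgrad x Xx).
have [[w0 _] [w'0 _]] := (andP hw, andP hw').
exists sigma, M; split=> //; split=> // xb [Xb _] alpha halpha x Xx.
have -> : x - alpha *: Wmap w w' (gF x) - (xb - alpha *: Wmap w w' (gF xb)) =
          (x - xb) - alpha *: (Wmap w w' (gF x) - Wmap w w' (gF xb)).
  by apply/rowP => k; rewrite !mxE; ring.
apply: (enorm_subZ_le sigma_gt0 M_gt0 halpha).
  exact: (dot_Wmap_strongly_monotone hXcvx sigma_gt0 sc1 sc2
    (fun x Xx => (model x Xx).1) (fun x Xx => (model x Xx).2) lip w0 w'0 hww Xb Xx).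
apply: le_trans (enorm_le_norm1 _) _.
exact: le_trans (norm1_Wmap_sub_le _ _ w0 w'0 hww) (lip _ _ Xx Xb).
Qed.
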